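(* Let $\mathcal X$ be an input space and $\mathcal Y$ an output space, let $r:\mathcal X\times\mathcal Y\to\mathbb R$ be a reward function, let $\pi_0(y\mid x)$ be the current conditional policy, assumed absolutely continuous, let $A(x,y)$ denote the advantage function (of the form $r(x,y)+\lambda(x)$ for a baseline $\lambda:\mathcal X\to\mathbb R$), and fix $\gamma\ge 0$ and $\eta>0$. Let $\delta\mathcal F(\pi_0;\delta\pi)=\int_{\mathcal Y}r(x,y)\,\delta\pi(y\mid x)\,dy$ be the first variation of the expected return functional $\mathcal F(\pi)=\mathbb E_{y\sim\pi(y\mid x)}[r(x,y)]$. Consider, over all admissible variations $\delta\pi(y\mid x)$ (signed measures with $\int\delta\pi(y\mid x)\,dy=0$ for every $x$), the local update problem with the $\gamma$-weighted variational metric \[ \max_{\delta\pi}\Big\{\delta\mathcal F(\pi_0;\delta\pi)-\frac{1}{2\eta}\int_{\mathcal Y}\frac{(\delta\pi(y\mid x))^2}{|A(x,y)|^{\gamma}\,\pi_0(y\mid x)}\,dy\Big\}. \] Then the optimal ascent satisfies \[ \delta\pi(y\mid x)\propto\pi_0(y\mid x)\,\mathrm{sign}(A(x,y))\,|A(x,y)|^{1+\gamma}. \]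
   Context: The $\gamma$-weighted variational metric on admissible variations at $\pi_0$ is $\langle\delta\pi_1,\delta\pi_2\rangle^{\gamma}_{\pi_0}=\int_{\mathcal Y}\frac{\delta\pi_1(y\mid x)\,\delta\pi_2(y\mid x)}{|A(x,y)|^{\gamma}\pi_0(y\mid x)}\,dy$, a weighted version of the Fisher–Rao metric; advantage functions differing by a function of $x$ alone are regarded as equivalent (they give the same policy gradient). *)

From HB Require Import structures.
From mathcomp Require Import all_boot all_order all_algebra.
From mathcomp Require Import all_classical all_reals all_analysis.
Set Implicit Arguments. Unset Strict Implicit. Unset Printing Implicit Defensive.
Import Order.TTheory GRing.Theory Num.Theory.
Local Open Scope classical_set_scope.
Local Open Scope ring_scope.

Section VariationalUpdate.
Context {R : realType} {d : measure_display} {Y : measurableType d}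
  (mu : {measure set Y -> \bar R}).

Definition vweight (gamma : R) (A pi0 : Y -> R) (y : Y) : R :=
  `|A y| `^ gamma * pi0 y.

Definition vmetric (gamma : R) (A pi0 : Y -> R) (f g : Y -> R) : R :=
  Rintegral mu setT (fun y => f y * g y / vweight gamma A pi0 y).

Definition first_variation (r f : Y -> R) : R :=
  Rintegral mu setT (fun y => r y * f y).

(* admissible variations (at fixed x): densities w.r.t. dy with total mass 0,
   vanishing where the weight vanishes, with finite first variation and
   finite gamma-weighted metric norm *)
Definition admissible (gamma : R) (r A pi0 : Y -> R) (f : Y -> R) : Prop :=
  measurable_fun setT f /\
  mu.-integrable setT (EFin \o f) /\
  (\int[mu]_y (f y)%:E = 0)%E /\
  {ae mu, forall y, vweight gamma A pi0 y = 0 -> f y = 0} /\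
  mu.-integrable setT (fun y => (r y * f y)%:E) /\
  mu.-integrable setT (fun y => (f y ^+ 2 / vweight gamma A pi0 y)%:E).

Definition local_objective (gamma eta : R) (r A pi0 : Y -> R) (f : Y -> R) : R :=
  first_variation r f - (2 * eta)^-1 * vmetric gamma A pi0 f f.

Definition is_optimal_ascent (gamma eta : R) (r A pi0 : Y -> R) (f : Y -> R) : Prop :=
  admissible gamma r A pi0 f /\
  forall g, admissible gamma r A pi0 g ->
    local_objective gamma eta r A pi0 g <= local_objective gamma eta r A pi0 f.

End VariationalUpdate.

From HB Require Import structures.
From mathcomp Require Import all_boot all_order all_algebra.
From mathcomp Require Import all_classical all_reals all_analysis.
From mathcomp Require Import measurable_realfun.
From mathcomp Require Import ring lra.
Import Order.TTheory GRing.Theory Num.Theory.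
Local Open Scope classical_set_scope.
Local Open Scope ring_scope.

(** Completing the square in the weighted metric.  Write w = |A|^gamma pi0 and
    h = eta w A.  Pointwise, (g - h)^2 / w = g^2 / w - 2 eta A g + eta^2 w A^2,
    and for a variation g of total mass zero the baseline drops out of the
    first variation: int A g = int r g.  Integrating therefore gives
      J(g) = J(h) - ||g - h||_w^2 / (2 eta),
    so h maximises J, and any maximiser is at distance zero from h, i.e. equals
    it almost everywhere.  The centring hypothesis on A is exactly the statement
    that h has total mass zero, and h = eta pi0 sign(A) |A|^(1+gamma). *)

Section RealIntegrable.
Context {R : realType} {d : measure_display} {T : measurableType d}
  {mu : {measure set T -> \bar R}} {D : set T}.
Hypothesis mD : measurable D.

Lemma integrableZl_EFin (k : R) {f : T -> R} : mu.-integrable D (EFin \o f) ->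
  mu.-integrable D (EFin \o (fun x => k * f x)).
Proof.
by move=> /(integrableZl mD k); apply: eq_integrable => // x _; rewrite /= EFinM.
Qed.

Lemma integrableD_EFin {f g : T -> R} : mu.-integrable D (EFin \o f) ->
  mu.-integrable D (EFin \o g) -> mu.-integrable D (EFin \o (fun x => f x + g x)).
Proof. by move=> If Ig; apply: eq_integrable (integrableD mD If Ig) => // x _. Qed.

Lemma integrableB_EFin {f g : T -> R} : mu.-integrable D (EFin \o f) ->
  mu.-integrable D (EFin \o g) -> mu.-integrable D (EFin \o (fun x => f x - g x)).
Proof. by move=> If Ig; apply: eq_integrable (integrableB mD If Ig) => // x _. Qed.

Lemma ge0_integrable_EFin {f : T -> R} : measurable_fun D f ->
  (forall x, D x -> 0 <= f x) -> (\int[mu]_(x in D) (f x)%:E < +oo)%E ->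
  mu.-integrable D (EFin \o f).
Proof.
move=> mf f0 fioo; apply/integrableP; split; first exact/measurable_EFinP.
rewrite (eq_integral (EFin \o f)) // => x /[!inE] Dx.
by rewrite /= ger0_norm ?f0.
Qed.

Lemma ae_eq_integrable {f g : T -> \bar R} : measurable_fun D f ->
  ae_eq mu D f g -> mu.-integrable D g -> mu.-integrable D f.
Proof.
move=> mf fg /integrableP[mg gioo]; apply/integrableP; split => //.
by rewrite (ae_eq_integral _ _ mD _ _ (ae_eq_abse fg)) //; exact: measurableT_comp.
Qed.

Lemma ae_eq_Rintegral {f g : T -> R} : measurable_fun D f -> measurable_fun D g ->
  ae_eq mu D f g -> \int[mu]_(x in D) f x = \int[mu]_(x in D) g x.
Proof.
move=> mf mg fg; rewrite /Rintegral (ae_eq_integral _ _ mD _ _ (ae_eq_comp EFin fg)) //.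
- exact/measurable_EFinP.
- exact/measurable_EFinP.
Qed.

Lemma ge0_Rintegral_eq0_ae {f : T -> R} : mu.-integrable D (EFin \o f) ->
  (forall x, D x -> 0 <= f x) -> \int[mu]_(x in D) f x = 0 -> ae_eq mu D f (cst 0).
Proof.
move=> If f0 If0.
have : (\int[mu]_(x in D) `|(EFin \o f) x| = 0)%E.
  rewrite (eq_integral (EFin \o f)); last first.
    by move=> x /[!inE] Dx; rewrite /= ger0_norm ?f0.
  by rewrite -(fineK (integrable_fin_num mD If)) -/(Rintegral _ _ _) If0.
move/(ae_eq_integral_abs mu mD (measurable_int _ If)).
by apply: filterS => x fx0 /fx0 [].
Qed.

End RealIntegrable.

(* At w = 0 both sides vanish because g = 0 and 0^-1 = 0. *)
Lemma completing_square_div (F : fieldType) (e w a g : F) : (w = 0 -> g = 0) ->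
  (g - e * (w * a)) ^+ 2 / w =
  g ^+ 2 / w - 2 * e * (a * g) + e ^+ 2 * (w * a ^+ 2).
Proof.
have [-> /(_ erefl) ->|w_neq0 _] := eqVneq w 0.
  by rewrite invr0 !(mulr0, mul0r) subr0 addr0.
by field.
Qed.

Lemma powR_mul_le1Dsqr {R : realType} (gamma t : R) : 0 <= gamma -> 0 <= t ->
  t `^ gamma * t <= 1 + t `^ gamma * t ^+ 2.
Proof.
move=> gamma_ge0 t_ge0; have tg_ge0 : 0 <= t `^ gamma := powR_ge0 _ _.
have [t_le1|t_gt1] := leP t 1.
  have : t `^ gamma <= 1.
    have := @ge0_ler_powR R gamma gamma_ge0 t 1.
    by rewrite powR1; apply; rewrite ?nnegrE.
  nra.
have : 0 <= t `^ gamma * t * (t - 1) by rewrite !mulr_ge0 // subr_ge0 ltW.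
nra.
Qed.

Section Weight.
Context {R : realType} {d : measure_display} {Y : measurableType d}.
Variables (gamma : R) (a p : Y -> R).
Hypothesis gamma_ge0 : 0 <= gamma.

Lemma vweight_ge0 y : 0 <= p y -> 0 <= vweight gamma a p y.
Proof. by move=> p0; rewrite mulr_ge0 ?powR_ge0. Qed.

Lemma measurable_vweight : measurable_fun setT a -> measurable_fun setT p ->
  measurable_fun setT (vweight gamma a p).
Proof.
move=> ma mp; apply: measurable_funM => //.
exact/(measurableT_comp (measurable_powR _))/measurableT_comp.
Qed.

Lemma measurable_vweight_inv : measurable_fun setT a -> measurable_fun setT p ->
  (forall y, 0 <= p y) -> measurable_fun setT (fun y => (vweight gamma a p y)^-1).
Proof.
move=> ma mp p_ge0; rewrite (_ : (fun y => _) = fun y => vweight gamma a p y `^ (-1)).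
  exact/(measurableT_comp (measurable_powR _))/measurable_vweight.
by apply/funext => y; rewrite powR_inv1 ?vweight_ge0.
Qed.

Lemma vweight_mul y :
  vweight gamma a p y * a y = p y * Num.sg (a y) * `|a y| `^ (1 + gamma).
Proof.
rewrite /vweight powRD ?powRr1 //; last first.
  by rewrite (@gt_eqF _ _ (1 + gamma) 0) //; move: gamma_ge0; lra.
by rewrite [X in _ * X = _]numEsg; ring.
Qed.

Lemma vweight_mul_sqr y :
  vweight gamma a p y * a y ^+ 2 = p y * `|a y| `^ (2 + gamma).
Proof.
rewrite /vweight powRD; last first.
  by rewrite (@gt_eqF _ _ (2 + gamma) 0) //; move: gamma_ge0; lra.
by rewrite powR_mulrn // real_normK ?num_real //; ring.
Qed.

Lemma normr_vweight_mul_le y : 0 <= p y ->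
  `|vweight gamma a p y * a y| <= p y + vweight gamma a p y * a y ^+ 2.
Proof.
move=> p0; rewrite normrM ger0_norm ?vweight_ge0 //.
rewrite /vweight -real_normK ?num_real //.
have := ler_wpM2l p0 (powR_mul_le1Dsqr _ _ gamma_ge0 (normr_ge0 (a y))).
by rewrite mulrDr mulr1 ![_ `^ gamma * p y * _]mulrAC ![_ * p y]mulrC.
Qed.

End Weight.

Lemma vmetric_ge0 {R : realType} {d : measure_display} {Y : measurableType d}
  (mu : {measure set Y -> \bar R}) (gamma : R) (a p f : Y -> R) :
  (forall y, 0 <= p y) -> 0 <= vmetric mu gamma a p f f.
Proof.
move=> p_ge0; apply: Rintegral_ge0 => y _.
by rewrite divr_ge0 ?vweight_ge0 // -expr2 sqr_ge0.
Qed.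

Definition weighted_ascent {R : realType} {d : measure_display} {Y : measurableType d}
  (gamma eta : R) (a p : Y -> R) (y : Y) : R := eta * (vweight gamma a p y * a y).

Section LocalUpdate.
Context {R : realType} {d : measure_display} {Y : measurableType d}
  (mu : {measure set Y -> \bar R}).
Context {r a p : Y -> R} {lam gamma eta : R}.
Hypotheses (gamma_ge0 : 0 <= gamma) (eta_gt0 : 0 < eta).
Hypotheses (mr : measurable_fun setT r) (mp : measurable_fun setT p).
Hypothesis p_ge0 : forall y, 0 <= p y.
Hypothesis p_int : mu.-integrable setT (EFin \o p).
Hypothesis aE : forall y, a y = r y + lam.
Hypothesis int_wa2 : mu.-integrable setT (fun y => (p y * `|a y| `^ (2 + gamma))%:E).
Hypothesis a_centred : (\int[mu]_y (`|a y| `^ gamma * p y * a y)%:E = 0)%E.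

Local Notation w := (vweight gamma a p).
Local Notation ascent := (weighted_ascent gamma eta a p).
Local Notation admissible := (admissible mu gamma r a p).
Local Notation J := (local_objective mu gamma eta r a p).
Local Notation K := (Rintegral mu setT (fun y => w y * a y ^+ 2)).

Let ma : measurable_fun setT a.
Proof. by rewrite (funext aE); exact: measurable_funD. Qed.

Let mw : measurable_fun setT w := measurable_vweight gamma a p ma mp.

Let int_w_sqr : mu.-integrable setT (EFin \o fun y => w y * a y ^+ 2).
Proof. by apply: eq_integrable int_wa2 => // y _; rewrite /= vweight_mul_sqr. Qed.

Let int_w_mul : mu.-integrable setT (EFin \o fun y => w y * a y).
Proof.
apply: (le_integrable measurableT _ _ (integrableD_EFin measurableT p_int int_w_sqr)).
  exact/measurable_EFinP/measurable_funM.
move=> y _; rewrite /= lee_fin (ger0_norm (addr_ge0 (p_ge0 y) _)).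
  exact: normr_vweight_mul_le.
by rewrite mulr_ge0 ?vweight_ge0 ?sqr_ge0.
Qed.

Let measurable_weighted_ascent : measurable_fun setT ascent.
Proof. by apply: measurable_funM => //; exact: measurable_funM. Qed.

Lemma integrable_weighted_ascent : mu.-integrable setT (EFin \o ascent).
Proof. exact: integrableZl_EFin. Qed.

Lemma integral_weighted_ascent : (\int[mu]_y (ascent y)%:E = 0)%E.
Proof.
under eq_integral do rewrite EFinM.
by rewrite integralZl // a_centred mule0.
Qed.

Lemma admissible_weighted_ascent : admissible ascent.
Proof.
have rE y : r y = a y - lam by rewrite aE addrK.
split; first exact: measurable_weighted_ascent.
split; first exact: integrable_weighted_ascent.
split; first exact: integral_weighted_ascent.
split; first by apply: aeW => y w0; rewrite /weighted_ascent w0 mul0r mulr0.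
split.
  apply: eq_integrable (integrableB_EFin measurableT
    (integrableZl_EFin measurableT eta int_w_sqr)
    (integrableZl_EFin measurableT lam integrable_weighted_ascent)) => // y _.
  by rewrite /= rE /weighted_ascent; congr EFin; ring.
apply: eq_integrable (integrableZl_EFin measurableT (eta ^+ 2) int_w_sqr) => // y _.
rewrite /= /weighted_ascent; congr EFin.
have [->|w_neq0] := eqVneq (w y) 0; first by rewrite invr0 !(mul0r, mulr0).
by field.
Qed.

Lemma first_variation_advantage {g : Y -> R} : admissible g ->
  first_variation mu a g = first_variation mu r g.
Proof.
case=> _ [Ig [g_int0 [_ [Irg _]]]].
rewrite /first_variation (eq_Rintegral mu (g := fun y => r y * g y + lam * g y)).
  rewrite RintegralD ?RintegralZl //; last exact: integrableZl_EFin.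
  by rewrite /Rintegral g_int0 mulr0 addr0.
by move=> y _; rewrite aE mulrDl (mulrC lam).
Qed.

Let int_advantage_mul {g : Y -> R} : admissible g ->
  mu.-integrable setT (EFin \o fun y => a y * g y).
Proof.
case=> _ [Ig [_ [_ [Irg _]]]].
apply: eq_integrable (integrableD_EFin measurableT Irg
  (integrableZl_EFin measurableT lam Ig)) => // y _.
by rewrite /= aE mulrDl (mulrC lam).
Qed.

Let completed_square_ae {g : Y -> R} : admissible g ->
  {ae mu, forall y, setT y ->
    (g y - ascent y) * (g y - ascent y) / w y =
    g y * g y / w y - 2 * eta * (a y * g y) + eta ^+ 2 * (w y * a y ^+ 2)}.
Proof.
case=> _ [_ [_ [gae _]]]; apply: filterS gae => y g0 _.
by rewrite -!expr2; exact: completing_square_div.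
Qed.

Let measurable_completed_square {g : Y -> R} : measurable_fun setT g ->
  measurable_fun setT (fun y => (g y - ascent y) * (g y - ascent y) / w y).
Proof.
move=> mg; have mga : measurable_fun setT (fun y => g y - ascent y).
  exact: measurable_funB.
by apply: measurable_funM; [exact: measurable_funM | exact: measurable_vweight_inv].
Qed.

Let int_expanded_square {g : Y -> R} : admissible g ->
  mu.-integrable setT (EFin \o fun y =>
  g y * g y / w y - 2 * eta * (a y * g y) + eta ^+ 2 * (w y * a y ^+ 2)).
Proof.
move=> adm_g; have [_ [_ [_ [_ [_ Ig2]]]]] := adm_g.
apply: integrableD_EFin => //; last exact: integrableZl_EFin.
apply: integrableB_EFin => //.
by apply: integrableZl_EFin => //; exact: int_advantage_mul.
Qed.

Lemma integrable_completed_square {g : Y -> R} : admissible g ->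
  mu.-integrable setT (EFin \o fun y => (g y - ascent y) * (g y - ascent y) / w y).
Proof.
move=> adm_g; have [mg _] := adm_g.
apply: (ae_eq_integrable measurableT _ _ (int_expanded_square adm_g)).
  exact/measurable_EFinP/measurable_completed_square.
by apply: filterS (completed_square_ae adm_g) => y eq_y /eq_y /= ->.
Qed.

Lemma local_objective_completed {g : Y -> R} : admissible g ->
  J g = eta * K / 2 - (2 * eta)^-1 *
    vmetric mu gamma a p (fun y => g y - ascent y) (fun y => g y - ascent y).
Proof.
move=> adm_g; have [mg [_ [_ [_ [_ Ig2]]]]] := adm_g.
rewrite /local_objective /vmetric.
rewrite (ae_eq_Rintegral measurableT _ _ (completed_square_ae adm_g)); last 2 first.
- exact: measurable_completed_square.
- exact/measurable_EFinP/(measurable_int mu (int_expanded_square adm_g)).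
have Iag := int_advantage_mul adm_g.
have I2ag := integrableZl_EFin measurableT (2 * eta) Iag.
rewrite RintegralD ?RintegralB ?RintegralZl //; last 2 first.
- exact: integrableB_EFin.
- exact: integrableZl_EFin.
rewrite -(first_variation_advantage adm_g) /first_variation.
by field; rewrite gt_eqF.
Qed.

Lemma local_objective_weighted_ascent : J ascent = eta * K / 2.
Proof.
rewrite (local_objective_completed admissible_weighted_ascent).
have -> : vmetric mu gamma a p (fun y => ascent y - ascent y)
    (fun y => ascent y - ascent y) = 0.
  rewrite /vmetric (eq_Rintegral mu (g := fun=> 0)) ?Rintegral_cst ?mul0r //.
  by move=> y _; rewrite subrr !mul0r.
by rewrite mulr0 subr0.
Qed.

Lemma weighted_ascent_optimal : is_optimal_ascent mu gamma eta r a p ascent.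
Proof.
split=> [|g adm_g]; first exact: admissible_weighted_ascent.
rewrite local_objective_weighted_ascent (local_objective_completed adm_g) gerBl.
by rewrite mulr_ge0 ?vmetric_ge0 // invr_ge0 mulr_ge0 // ltW.
Qed.

Lemma optimal_ascent_ae {g : Y -> R} : is_optimal_ascent mu gamma eta r a p g ->
  {ae mu, forall y, g y = ascent y}.
Proof.
case=> adm_g g_max; have [_ [_ [_ [gae _]]]] := adm_g.
have dist0 :
    vmetric mu gamma a p (fun y => g y - ascent y) (fun y => g y - ascent y) = 0.
  apply/eqP; rewrite eq_le vmetric_ge0 // andbT.
  have := g_max _ admissible_weighted_ascent.
  rewrite local_objective_weighted_ascent (local_objective_completed adm_g).
  by rewrite -[X in X <= _]addr0 lerD2l lerNr oppr0 pmulr_rle0 // invr_gt0 mulr_gt0.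
have dev_ge0 y : 0 <= (g y - ascent y) * (g y - ascent y) / w y.
  by rewrite divr_ge0 ?vweight_ge0 // -expr2 sqr_ge0.
have dev0 := ge0_Rintegral_eq0_ae measurableT (integrable_completed_square adm_g)
  (fun y _ => dev_ge0 y) dist0.
apply: filterS2 dev0 gae => y /(_ I) /= dev_y g0.
have [w0|w_neq0] := eqVneq (w y) 0.
  by rewrite g0 // /weighted_ascent w0 mul0r mulr0.
have sq0 : (g y - ascent y) * (g y - ascent y) = 0.
  by have := congr1 ( *%R^~ (w y)) dev_y; rewrite /= mul0r divfK.
by apply/eqP; rewrite -subr_eq0 -sqrf_eq0 expr2 sq0.
Qed.

End LocalUpdate.

Theorem theorem3 (R : realType) (d : measure_display) (Y : measurableType d)
  (mu : {measure set Y -> \bar R}) (X : Type)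
  (r : X -> Y -> R) (pi0 : X -> Y -> R) (lam : X -> R) (gamma eta : R) :
  0 <= gamma -> 0 < eta ->
  (forall x, measurable_fun setT (r x)) ->
  (forall x, measurable_fun setT (pi0 x)) ->
  (forall x y, 0 <= pi0 x y) ->
  (forall x, (\int[mu]_y (pi0 x y)%:E = 1)%E) ->
  let A := fun x y => r x y + lam x in
  (* regularity: the candidate ascent has finite weighted norm *)
  (forall x, mu.-integrable setT (fun y => (pi0 x y * `|A x y| `^ (2 + gamma))%:E)) ->
  (* A is the advantage: the baseline centres it w.r.t. the metric weight *)
  (forall x, (\int[mu]_y (`|A x y| `^ gamma * pi0 x y * A x y)%:E = 0)%E) ->
  forall x,
    (exists f, is_optimal_ascent mu gamma eta (r x) (A x) (pi0 x) f) /\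
    (forall f, is_optimal_ascent mu gamma eta (r x) (A x) (pi0 x) f ->
       exists c : R, 0 < c /\
         {ae mu, forall y,
            f y = c * (pi0 x y * Num.sg (A x y) * `|A x y| `^ (1 + gamma))}).
Proof.
move=> gamma_ge0 eta_gt0 mr mp p_ge0 p_int1 A int_A centred_A x.
have p_int : mu.-integrable setT (EFin \o pi0 x).
  by apply: ge0_integrable_EFin => //; rewrite p_int1 ltry.
have AE y : A x y = r x y + lam x by [].
split.
  exists (weighted_ascent gamma eta (A x) (pi0 x)).
  exact: (weighted_ascent_optimal mu gamma_ge0 eta_gt0 (mr x) (mp x) (p_ge0 x)
    p_int AE (int_A x) (centred_A x)).
move=> f /(optimal_ascent_ae mu gamma_ge0 eta_gt0 (mr x) (mp x) (p_ge0 x)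
  p_int AE (int_A x) (centred_A x)) f_ascent.
exists eta; split => //.
by apply: filterS f_ascent => y ->; rewrite /weighted_ascent vweight_mul.
Qed.
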